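(* Fix any total budget $\mathrm{TB}\in\mathbb N_0$. If the integers satisfy $n>m$, then the integer game forms satisfy $(n)>(m)$.
   Context: Game forms are defined recursively: $G=\{G^{\mathcal L}\mid G^{\mathcal R}\}$ with finite sets of Left and Right options, and finite birthday. Integer game forms: $(0)=\{\varnothing\mid\varnothing\}$; for $n\in\mathbb N$, $(n)=\{(n-1)\mid\varnothing\}$ and $(-n)=\overline{(n)}=\{\varnothing\mid(-(n-1))\}$, where the conjugate is $\bar G=\{\overline{G^{\mathcal R}}\mid\overline{G^{\mathcal L}}\}$. The budget set for total budget $\mathrm{TB}$ is $\mathcal B=\{0,\dots,\mathrm{TB},\hat 0,\dots,\widehat{\mathrm{TB}}\}$: state $p$ (resp. $\hat p$) means Left holds $p$ dollars and Right holds $\mathrm{TB}-p$, and Right (resp. Left) holds the tie-breaking marker. Play of $(G,\tilde p)$: at every position (terminal ones included) both players bid simultaneously, Left $\ell\in\{0,\dots,p\}$, Right $r\in\{0,\dots,\mathrm{TB}-p\}$. If Left holds the marker (state $\hat p$): if $\ell>r$ Left moves to $(G^L,\widehat{p-\ell})$, or, including the marker (allowed when $\ell\ge r$), to $(G^L,p-\ell)$; if $\ell=r$ Left wins, the marker passes to Right, play continues at $(G^L,p-\ell)$; if $\ell<r$ Right moves to $(G^R,\widehat{p+r})$. Symmetrically when Right holds the marker (state $p$): if $r>\ell$ Right moves to $(G^R,p+r)$ or, including the marker, to $(G^R,\widehat{p+r})$; if $r=\ell$ Right wins, the marker passes to Left, play continues at $(G^R,\widehat{p+r})$; if $r<\ell$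 Left moves to $(G^L,p-\ell)$. A player who wins a bid but has no option loses. $o(G,\tilde p)\in\{\mathrm L,\mathrm R\}$ is the winner under optimal play; $\mathrm L>\mathrm R$. Disjunctive sum $G+H=\{G^{\mathcal L}+H,G+H^{\mathcal L}\mid G^{\mathcal R}+H,G+H^{\mathcal R}\}$. $G\ge H$ means $o(G+X,\tilde p)\ge o(H+X,\tilde p)$ for all game forms $X$ and all $\tilde p\in\mathcal B$; $G>H$ means $G\ge H$ and not $H\ge G$. *)

From mathcomp Require Import all_boot all_order all_algebra.
Set Implicit Arguments. Unset Strict Implicit. Unset Printing Implicit Defensive.

(* Game forms: finite lists of Left and Right options; finite birthday is
   automatic since the type is inductive (well-founded). *)
Inductive game : Type := Game of seq game & seq game.

Definition leftopts (G : game) : seq game := let: Game L _ := G in L.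
Definition rightopts (G : game) : seq game := let: Game _ R := G in R.

Fixpoint conjg (G : game) : game :=
  match G with Game L R => Game (map conjg R) (map conjg L) end.

(* Integer game forms: (0) = {|}, (n) = {(n-1) |}, (-n) = conj (n). *)
Fixpoint natg (n : nat) : game :=
  match n with
  | 0 => Game [::] [::]
  | k.+1 => Game [:: natg k] [::]
  end.

Definition intg (z : int) : game :=
  match z with
  | Posz n => natg n
  | Negz n => conjg (natg n.+1)
  end.

(* Disjunctive sum G + H = {G^L + H, G + H^L | G^R + H, G + H^R} *)
Fixpoint gadd (G H : game) {struct G} : game :=
  match G with
  | Game GL GR =>
    let fix addH (H : game) : game :=
      match H with
      | Game HL HR =>
        Game (map (fun g => gadd g H) GL ++ map addH HL)
             (map (fun g => gadd g H) GR ++ map addH HR)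
      end in addH H
  end.

(* The budget state is
   (p, hat) with p = Left's money (Right holds TB - p); hat = true means
   the state \hat p (Left holds the tie-breaking marker), hat = false means
   the state p (Right holds the marker).  Result true = Left wins (L),
   false = Right wins (R).  Left wins iff she has a bid l in {0..p} such that
   for every Right bid r in {0..TB-p}, she wins the resulting continuation
   (the bid winner then chooses the option, and, where allowed, whether to
   pass the marker). A player who wins the bid but has no option loses. *)
Fixpoint outcome (TB : nat) (G : game) (p : nat) (hat : bool) {struct G} : bool :=
  match G with
  | Game GL GR =>
    let leftmv (p' : nat) (hs : seq bool) :=
        has (fun g => has (fun h => outcome TB g p' h) hs) GL in
    let rightmv (p' : nat) (hs : seq bool) :=
        all (fun g => all (fun h => outcome TB g p' h) hs) GR in
    has (fun l =>
      all (fun r =>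
        if hat then
          if r < l then leftmv (p - l) [:: true; false]
          else if l == r then leftmv (p - l) [:: false]
          else rightmv (p + r) [:: true]
        else
          if l < r then rightmv (p + r) [:: false; true]
          else if l == r then rightmv (p + r) [:: true]
          else leftmv (p - l) [:: false])
        (iota 0 (TB - p).+1))
      (iota 0 p.+1)
  end.

Definition game_ge (TB : nat) (G H : game) : Prop :=
  forall (X : game) (p : nat) (hat : bool), p <= TB ->
    outcome TB (gadd H X) p hat -> outcome TB (gadd G X) p hat.

Definition game_gt (TB : nat) (G H : game) : Prop :=
  game_ge TB G H /\ ~ game_ge TB H G.

(* Bidding zero makes the opponent move, unless one holds the tie-breaking
   marker and the opponent also bids zero, in which case one moves oneself.
   Hence in a race where Left has a moves and Right has b (no other options),
   Left wins iff b < a, or a = b and Right holds the marker, whatever the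
   budgets.  Integers are ordered by a move-by-move simulation: in (a) + X
   versus (b) + X with b <= a, every Left move of the second sum and every
   Right move of the first is copied in the other sum, preserving b <= a.
   Strictness: in the context X = (-(m+1)) with Right holding the marker,
   (m+1) + X is a race Left wins and (m) + X one she loses. *)

From Pilot Require Import Defs.
From mathcomp Require Import all_boot all_order all_algebra zify.
From Stdlib Require List.
Import Order.TTheory GRing.Theory Num.Theory.
Set Implicit Arguments. Unset Strict Implicit. Unset Printing Implicit Defensive.

Fixpoint game_ind2 (P : game -> Prop)
    (IH : forall L R, List.Forall P L -> List.Forall P R -> P (Game L R))
    (G : game) : P G :=
  let: Game L R := G in
  let fix all_P (s : seq game) : List.Forall P s :=
    if s is g :: s' then List.Forall_cons g (game_ind2 IH g) (all_P s')
    else List.Forall_nil P in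
  IH L R (all_P L) (all_P R).

(* [has]/[all] and [List.existsb]/[List.forallb] are the same fixpoints. *)
Lemma has_In (T : Type) (a : pred T) (s : seq T) :
  has a s <-> exists x, List.In x s /\ a x.
Proof. exact: List.existsb_exists. Qed.

Lemma all_In (T : Type) (a : pred T) (s : seq T) :
  all a s <-> forall x, List.In x s -> a x.
Proof. exact: List.forallb_forall. Qed.

Section ZeroBids.
Variables (TB : nat) (GL GR : seq game) (p : nat).

Lemma left_win_bid0 (hat : bool) :
  (forall g, List.In g GR -> forall p' h, outcome TB g p' h) ->
  (hat -> exists g, List.In g GL /\ outcome TB g p false) ->
  outcome TB (Game GL GR) p hat.
Proof.
move=> right_lose left_win.
apply/hasP; exists 0; first by rewrite mem_iota.
apply/allP => r _; rewrite -/outcome subn0.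
have right_moves p' hs : all (fun g => all (outcome TB g p') hs) GR.
  by apply/all_In => g Hg; apply/all_In => h _; exact: right_lose.
case: hat left_win => [/(_ isT) left_win|_]; case: r => [|r]; rewrite ?right_moves //=.
by apply/has_In; case: left_win => g [Hg win]; exists g; rewrite win.
Qed.

Lemma right_win_bid0 (hat : bool) :
  (forall g, List.In g GL -> forall p' h, ~~ outcome TB g p' h) ->
  (~~ hat -> exists g, List.In g GR /\ ~~ outcome TB g p true) ->
  ~~ outcome TB (Game GL GR) p hat.
Proof.
move=> left_lose right_win.
rewrite -all_predC; apply/allP => l _; apply/negP => /allP /(_ 0).
rewrite mem_iota -/outcome addn0 => /(_ isT).
have left_moves p' hs : has (fun g => has (outcome TB g p') hs) GL = false.
  apply/negbTE/negP => /has_In [g [Hg /has_In [h [_]]]]; exact/negP/left_lose.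
case: hat right_win => [_|/(_ isT) right_win]; case: l => [|l];
  rewrite ?left_moves //=.
case: right_win => g [Hg lose] /all_In /(_ g Hg).
by rewrite (negbTE lose).
Qed.

End ZeroBids.

Section Race.
Variables (TB : nat) (race : nat -> nat -> game).
Hypothesis leftopts_race :
  forall a b, leftopts (race a b) = if a is a'.+1 then [:: race a' b] else [::].
Hypothesis rightopts_race :
  forall a b, rightopts (race a b) = if b is b'.+1 then [:: race a b'] else [::].

Lemma outcome_race a b p hat :
  outcome TB (race a b) p hat = (b < a) || (a == b) && ~~ hat.
Proof.
move Gab: (race a b) => G; elim/game_ind2: G a b Gab p hat.
move=> L R /List.Forall_forall IHL /List.Forall_forall IHR a b Gab p hat.
have eL : L = if a is a'.+1 then [:: race a' b] else [::].
  by rewrite -leftopts_race Gab.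
have eR : R = if b is b'.+1 then [:: race a b'] else [::].
  by rewrite -rightopts_race Gab.
have [win|lose] := boolP ((b < a) || (a == b) && ~~ hat).
- apply: left_win_bid0 => [g Hg p' h|hat_true].
  + move: (Hg); rewrite eR; case: b {eL eR Gab} win => [|b] // win [Eg|//].
    by rewrite (IHR g Hg a b) //; lia.
  + move: eL; case: a {eR Gab} win => [|a] win eL; first by lia.
    exists (race a b); split; first by rewrite eL; left.
    by rewrite (IHL _ _ a b) ?eL; [lia|left|].
- apply/negbTE; apply: right_win_bid0 => [g Hg p' h|hat_false].
  + move: (Hg); rewrite eL; case: a {eL eR Gab} lose => [|a] // lose [Eg|//].
    by rewrite (IHL g Hg a b) //; lia.
  + move: eR; case: b {eL Gab} lose => [|b] lose eR; first by lia.
    exists (race a b); split; first by rewrite eR; left.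
    by rewrite (IHR _ _ a b) ?eR; [lia|left|].
Qed.

End Race.

Definition simulation (S : game -> game -> Prop) : Prop :=
  (forall A B, S A B -> forall b, List.In b (leftopts B) ->
     exists a, List.In a (leftopts A) /\ S a b) /\
  (forall A B, S A B -> forall a, List.In a (rightopts A) ->
     exists b, List.In b (rightopts B) /\ S a b).

Lemma simulation_outcome TB S A B p hat :
  simulation S -> S A B -> outcome TB B p hat -> outcome TB A p hat.
Proof.
move=> [simL simR]; elim/game_ind2: A B p hat.
move=> L R /List.Forall_forall IHL /List.Forall_forall IHR [BL BR] p hat SAB.
have left_moves p' hs : has (fun b => has (outcome TB b p') hs) BL ->
    has (fun a => has (outcome TB a p') hs) L.
  move=> /has_In [b [Hb /has_In [h [Hh win]]]].
  have [a [Ha Sab]] := simL _ _ SAB b Hb.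
  apply/has_In; exists a; split=> //; apply/has_In; exists h; split=> //.
  exact: (IHL a Ha b _ _ Sab win).
have right_moves p' hs : all (fun b => all (outcome TB b p') hs) BR ->
    all (fun a => all (outcome TB a p') hs) R.
  move/all_In=> win; apply/all_In => a Ha.
  have [b [Hb Sab]] := simR _ _ SAB a Ha.
  apply/all_In => h Hh; apply: (IHR a Ha b _ _ Sab).
  by have /all_In := win b Hb; apply.
apply: sub_has => l; apply: sub_all => r.
by case: hat; case: ifP => _; try case: ifP => _; auto.
Qed.

Lemma leftopts_gadd G X :
  leftopts (gadd G X) = map (gadd^~ X) (leftopts G) ++ map (gadd G) (leftopts X).
Proof. by case: G; case: X. Qed.

Lemma rightopts_gadd G X :
  rightopts (gadd G X) = map (gadd^~ X) (rightopts G) ++ map (gadd G) (rightopts X).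
Proof. by case: G; case: X. Qed.

Definition sum_closure (S : game -> game -> Prop) (A B : game) : Prop :=
  exists G H X, S G H /\ A = gadd G X /\ B = gadd H X.

Lemma simulation_sum_closure S : simulation S -> simulation (sum_closure S).
Proof.
move=> [simL simR]; split=> _ _ [G [H [X [SGH [-> ->]]]]] g.
- rewrite leftopts_gadd List.in_app_iff !List.in_map_iff.
  case=> [[h [<- Hh]]|[x [<- Hx]]].
  + have [g' [Hg' Sg'h]] := simL _ _ SGH h Hh.
    exists (gadd g' X); split; last by exists g', h, X.
    by rewrite leftopts_gadd List.in_app_iff !List.in_map_iff; left; exists g'.
  + exists (gadd G x); split; last by exists G, H, x.
    by rewrite leftopts_gadd List.in_app_iff !List.in_map_iff; right; exists x.
- rewrite rightopts_gadd List.in_app_iff !List.in_map_iff.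
  case=> [[g' [<- Hg']]|[x [<- Hx]]].
  + have [h [Hh Sg'h]] := simR _ _ SGH g' Hg'.
    exists (gadd h X); split; last by exists g', h, X.
    by rewrite rightopts_gadd List.in_app_iff !List.in_map_iff; left; exists h.
  + exists (gadd H x); split; last by exists G, H, x.
    by rewrite rightopts_gadd List.in_app_iff !List.in_map_iff; right; exists x.
Qed.

Lemma simulation_game_ge TB S G H : simulation S -> S G H -> game_ge TB G H.
Proof.
move=> simS SGH X p hat _; apply: simulation_outcome (simulation_sum_closure simS) _.
by exists G, H, X.
Qed.

Lemma game_ge_trans TB G H K : game_ge TB G H -> game_ge TB H K -> game_ge TB G K.
Proof. by move=> geGH geHK X p hat le_pTB /(geHK X p hat le_pTB); apply: geGH. Qed.

Local Open Scope ring_scope.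

Lemma intg_opp_nat (k : nat) : intg (- k%:Z) = Defs.conjg (natg k).
Proof. by case: k => [|k]; rewrite ?oppr0 // -NegzE. Qed.

Lemma leftopts_intg z : leftopts (intg z) = if 0 < z then [:: intg (z - 1)] else [::].
Proof. by case: z => [[|k]|k] //=; rewrite subn1. Qed.

Lemma rightopts_intg z : rightopts (intg z) = if z < 0 then [:: intg (z + 1)] else [::].
Proof.
case: z => [[|k]|k] //=.
by rewrite NegzE -addn1 PoszD opprD addrNK intg_opp_nat.
Qed.

Lemma simulation_intg_le :
  simulation (fun G H => exists a b : int, b <= a /\ G = intg a /\ H = intg b).
Proof.
split=> _ _ [a [b [le_ba [-> ->]]]] g.
- rewrite leftopts_intg; case: ifP => // b_gt0 [<-|//].
  exists (intg (a - 1)); rewrite leftopts_intg (lt_le_trans b_gt0 le_ba).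
  by split; [left | exists (a - 1), (b - 1); rewrite lerD2r].
- rewrite rightopts_intg; case: ifP => // a_lt0 [<-|//].
  exists (intg (b + 1)); rewrite rightopts_intg (le_lt_trans le_ba a_lt0).
  by split; [left | exists (a + 1), (b + 1); rewrite lerD2r].
Qed.

Lemma intg_ge TB (a b : int) : b <= a -> game_ge TB (intg a) (intg b).
Proof. by move=> le_ba; apply: simulation_game_ge simulation_intg_le _; exists a, b. Qed.

Lemma outcome_intg_add_opp TB (a b p : nat) hat :
  outcome TB (gadd (intg a) (intg (- b%:Z))) p hat = (b < a)%N || (a == b) && ~~ hat.
Proof.
rewrite intg_opp_nat.
by apply: (@outcome_race TB (fun a b => gadd (natg a) (Defs.conjg (natg b)))) => -[|a'] [|b'].
Qed.

Lemma outcome_intg_opp_add TB (a b p : nat) hat :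
  outcome TB (gadd (intg (- b%:Z)) (intg a)) p hat = (b < a)%N || (a == b) && ~~ hat.
Proof.
rewrite intg_opp_nat.
by apply: (@outcome_race TB (fun a b => gadd (Defs.conjg (natg b)) (natg a))) => -[|a'] [|b'].
Qed.

Lemma intg_not_ge_succ TB (m : int) : ~ game_ge TB (intg m) (intg (m + 1)).
Proof.
move/(_ (intg (- (m + 1))) 0%N false (leq0n TB)).
case: m => k.
- have -> : Posz k + 1 = k.+1 by lia.
  by rewrite !outcome_intg_add_opp; lia.
- have -> : Negz k + 1 = - k%:Z by lia.
  by rewrite opprK NegzE !outcome_intg_opp_add; lia.
Qed.

Theorem mainTheorem15 (TB : nat) (n m : int) :
  m < n -> game_gt TB (intg n) (intg m).
Proof.
move=> lt_mn; split; first exact/intg_ge/ltW.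
move=> ge_mn; have le_m1n : m + 1 <= n by rewrite lezD1.
exact: intg_not_ge_succ (game_ge_trans ge_mn (intg_ge le_m1n)).
Qed.
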